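(* Let $u$ be any configuration on $K_{m,n}$. Consider the following procedure. Set $v_0=\mathrm{park}(u)$, $f_0=0$ and $k=0$. While the value of $v_k$ at the sink $a_m$ is $\ge 0$: choose an index $i$ with $(v_k)_{b_i}=0$ (such an index always exists), set $v_{k+1}=\mathrm{park}(v_k-e_{b_i})$, $f_{k+1}=f_k+e_{b_i}$, and increase $k$ by one. Then this procedure is always executable and terminates after some finite number $N$ of iterations, and for any choice of the indices $i$ along the way, the final configuration $f_N$ is a proof for the rank of $u$; in particular $\mathrm{rank}(u)=N-1=\mathrm{degree}(f_N)-1$.
   Context: Let $m,n\ge 1$. $K_{m,n}$ is the complete bipartite graph with vertex set $V=A_m\sqcup B_n$, $A_m=\{a_1,\dots,a_m\}$, $B_n=\{b_1,\dots,b_n\}$, with exactly one edge $\{a_i,b_j\}$ for every $i,j$ and no other edges; the vertex $a_m$ is called the sink. A configuration is a function $u:V\to\mathbb Z$, written $u_c=u(c)$; $\mathrm{degree}(u)=\sum_{c\in V}u_c$. For $c\in V$, $e_c$ is the configuration equal to $1$ at $c$ and $0$ elsewhere. For $c\in V$ with graph degree $d_c$ (so $d_{a_i}=n$, $d_{b_j}=m$), the toppling vector is $\Delta^{(c)}=d_c e_c-\sum_{c'\text{ adjacent to }c}e_{c'}$, and for $C\subseteq V$, $\Delta^{(C)}=\sum_{c\in C}\Delta^{(c)}$. Two configurations are toppling equivalent if their difference is an integer linear combination of the vectors $\Delta^{(c)}$, $c\in V$. A configuration is effective if it is toppling equivalent to a configuration with all values $\ge 0$ (non-negative). The rank is $\mathrm{rank}(u)=-1+\min\{\mathrm{degree}(f):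 f \text{ non-negative and } u-f \text{ not effective}\}$. A proof for the rank of $u$ is a non-negative configuration $f$ such that $u-f$ is not effective and $\mathrm{degree}(f)=\mathrm{rank}(u)+1$. A configuration $u$ is parking (with respect to the sink $a_m$) if $u_c\ge 0$ for every $c\neq a_m$ and, for every non-empty $C\subseteq V\setminus\{a_m\}$, the configuration $u-\Delta^{(C)}$ takes a negative value at some vertex other than $a_m$. Every configuration $u$ is toppling equivalent to exactly one parking configuration, denoted $\mathrm{park}(u)$; and $u$ is effective if and only if $\mathrm{park}(u)$ is non-negative (i.e. its value at the sink is $\ge 0$). *)

From HB Require Import structures.
From mathcomp Require Import all_boot all_order all_algebra.
From Stdlib Require Import ClassicalEpsilon.
Set Implicit Arguments. Unset Strict Implicit. Unset Printing Implicit Defensive.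
Import Order.TTheory GRing.Theory Num.Theory.
Local Open Scope ring_scope.

(* Vertices: inl i = a_{i+1} (i : 'I_m), inr j = b_{j+1} (j : 'I_n). *)
Definition vert (m n : nat) : finType := ('I_m + 'I_n)%type.

Definition config (m n : nat) := vert m n -> int.

Lemma sink_lt (m : nat) (hm : (0 < m)%N) : (m.-1 < m)%N.
Proof. by rewrite ltn_predL. Qed.

Definition sink (m n : nat) (hm : (0 < m)%N) : vert m n :=
  inl (Ordinal (sink_lt hm)).

Definition bvert (m n : nat) (j : 'I_n) : vert m n := inr j.

Definition adj (m n : nat) (c c' : vert m n) : bool :=
  match c, c' with
  | inl _, inr _ => true
  | inr _, inl _ => true
  | _, _ => false
  end.

Definition gdeg (m n : nat) (c : vert m n) : int :=
  match c with inl _ => n%:Z | inr _ => m%:Z end.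

Definition degree (m n : nat) (u : config m n) : int := \sum_(c : vert m n) u c.

Definition unitc (m n : nat) (c : vert m n) : config m n :=
  fun c' => if c' == c then 1 else 0.

Definition cadd (m n : nat) (u w : config m n) : config m n := fun c => u c + w c.
Definition csub (m n : nat) (u w : config m n) : config m n := fun c => u c - w c.
Definition czero (m n : nat) : config m n := fun _ => 0.

Definition topple (m n : nat) (c : vert m n) : config m n :=
  fun c' => gdeg c * unitc c c' - \sum_(d : vert m n | adj c d) unitc d c'.

Definition toppleset (m n : nat) (C : {set vert m n}) : config m n :=
  fun c' => \sum_(c in C) topple c c'.

Definition nonneg (m n : nat) (u : config m n) : Prop := forall c, 0 <= u c.

Definition topp_equiv (m n : nat) (u w : config m n) : Prop :=
  exists z : vert m n -> int,
    forall c', u c' - w c' = \sum_(c : vert m n) z c * topple c c'.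

Definition effective (m n : nat) (u : config m n) : Prop :=
  exists w, topp_equiv u w /\ nonneg w.

Definition rank_spec (m n : nat) (u : config m n) (r : int) : Prop :=
  (exists f, nonneg f /\ ~ effective (csub u f) /\ degree f = r + 1) /\
  (forall f, nonneg f -> ~ effective (csub u f) -> r + 1 <= degree f).

Definition rank (m n : nat) (u : config m n) : int :=
  epsilon (inhabits 0) (rank_spec u).

Definition rank_proof (m n : nat) (u f : config m n) : Prop :=
  nonneg f /\ ~ effective (csub u f) /\ degree f = rank u + 1.

Definition parking (m n : nat) (hm : (0 < m)%N) (u : config m n) : Prop :=
  (forall c, c != sink n hm -> 0 <= u c) /\
  (forall C : {set vert m n}, C != set0 -> sink n hm \notin C ->
     exists c, c != sink n hm /\ u c - toppleset C c < 0).

(* park(u): the (unique) parking configuration toppling equivalent to u *)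
Definition park (m n : nat) (hm : (0 < m)%N) (u : config m n) : config m n :=
  epsilon (inhabits u) (fun v => parking hm v /\ topp_equiv u v).

(* The procedure, driven by a sequence of index choices idx:
   v_0 = park u, v_{k+1} = park (v_k - e_{b_{idx k}}). *)
Fixpoint traj (m n : nat) (hm : (0 < m)%N) (u : config m n) (idx : nat -> 'I_n)
    (k : nat) : config m n :=
  match k with
  | 0 => park hm u
  | k'.+1 => park hm (csub (traj hm u idx k') (unitc (bvert m (idx k'))))
  end.

Definition ftraj (m n : nat) (idx : nat -> 'I_n) (k : nat) : config m n :=
  fun c => \sum_(j < k) unitc (bvert m (idx j)) c.

Definition legal_step (m n : nat) (hm : (0 < m)%N) (u : config m n)
    (idx : nat -> 'I_n) (k : nat) : Prop :=
  0 <= traj hm u idx k (sink n hm) /\ traj hm u idx k (bvert m (idx k)) = 0.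

(* A configuration that is reduced (parking) with respect to a vertex a_q is
   effective exactly when its value at a_q is non-negative: if v - w = Delta z with
   w >= 0, reducedness forces the firing script z to be maximal at a_q (a maximum
   principle), hence (Delta z)(a_q) >= 0.  So u - f_N, which is equivalent to the final
   parking configuration, is not effective.  For the lower bound, let v >= 0 with
   v(b) = 0 and let v - f be non-effective, f >= 0.  Then f can be replaced by such a
   witness of the same degree with f(b) >= 1: either exchange b with a b' where f
   exceeds v, or move chips of f from the a-vertices to b-vertices at which the
   reduced form of v - f vanishes, which by the maximum principle again keeps v - f
   non-effective.  Since removing that chip from both v and f keeps v - f
   non-effective, each step of the procedure lowers the least degree of a witness by
   at most one, so every witness for u has degree at least N. *)

From mathcomp Require Import all_boot all_order all_algebra.
From mathcomp Require Import perm zify ring.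
From Stdlib Require Import ClassicalEpsilon Classical.
Set Implicit Arguments. Unset Strict Implicit. Unset Printing Implicit Defensive.
Import Order.TTheory GRing.Theory Num.Theory.
Local Open Scope ring_scope.

Section Laplacian.
Variables m n : nat.
Implicit Types (u v w f z : config m n) (c d : vert m n).

Definition lap z : config m n := fun c' => \sum_c z c * topple c c'.

Lemma toppleE c d : topple c d = gdeg c * unitc c d - (adj c d)%:R.
Proof.
rewrite /topple (big_mkcond (adj c)) (bigD1 d) //= big1 => [|d' /negbTE nd].
  by rewrite /unitc eqxx addr0; case: adj.
by rewrite /unitc eq_sym nd; case: adj.
Qed.

Lemma topple_sym c d : topple c d = topple d c.
Proof.
rewrite !toppleE /unitc eq_sym.
by case: eqP => [->|_]; rewrite ?mulr0 //; case: c d => ? [].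
Qed.

Lemma lapA z i : lap z (inl i) = \sum_(j < n) (z (inl i) - z (inr j)).
Proof.
rewrite /lap big_sumType /= sumrB (bigD1 i) //= big1 => [|i' ni].
  rewrite toppleE /unitc eqxx addr0 -sumrN sumr_const card_ord /=.
  congr (_ + _); first by rewrite subr0 mulr1 -natz mulr_natr.
  by apply: eq_bigr => j _; rewrite toppleE /unitc /= mulr0 sub0r mulrN1.
by rewrite toppleE /unitc (inj_eq inl_inj) eq_sym (negbTE ni) mulr0 subr0 mulr0.
Qed.

Lemma lapB z j : lap z (inr j) = \sum_(i < m) (z (inr j) - z (inl i)).
Proof.
rewrite /lap big_sumType /= sumrB addrC (bigD1 j) //= big1 => [|j' nj].
  rewrite toppleE /unitc eqxx addr0 -sumrN sumr_const card_ord /=.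
  congr (_ + _); first by rewrite subr0 mulr1 -natz mulr_natr.
  by apply: eq_bigr => i _; rewrite toppleE /unitc /= mulr0 sub0r mulrN1.
by rewrite toppleE /unitc (inj_eq inr_inj) eq_sym (negbTE nj) mulr0 subr0 mulr0.
Qed.

Lemma lapD z1 z2 c : lap (fun x => z1 x + z2 x) c = lap z1 c + lap z2 c.
Proof. by rewrite /lap -big_split; apply: eq_bigr => x _; rewrite mulrDl. Qed.

Lemma lapN z c : lap (fun x => - z x) c = - lap z c.
Proof. by rewrite /lap -sumrN; apply: eq_bigr => x _; rewrite mulNr. Qed.

Lemma lapZ t z c : lap (fun x => t * z x) c = t * lap z c.
Proof. by rewrite /lap mulr_sumr; apply: eq_bigr => x _; rewrite mulrA. Qed.

Lemma lap0 c : lap (fun _ => 0) c = 0.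
Proof. by rewrite /lap big1 // => x _; rewrite mul0r. Qed.

Lemma lap_sym g h : \sum_c g c * lap h c = \sum_c h c * lap g c.
Proof.
rewrite /lap; under eq_bigr do rewrite mulr_sumr.
rewrite exchange_big /=; apply: eq_bigr => d _; rewrite mulr_sumr.
by apply: eq_bigr => c _; rewrite topple_sym mulrCA.
Qed.

Lemma degree_lap z : degree (lap z) = 0.
Proof.
rewrite /degree big_sumType /=.
under eq_bigr do rewrite lapA; under [X in _ + X]eq_bigr do rewrite lapB.
rewrite [X in _ + X]exchange_big -big_split big1 //= => i _.
by rewrite -big_split big1 //= => j _; rewrite addrC subrKA subrr.
Qed.

Lemma topp_equivE u w : topp_equiv u w <-> exists z, forall c, u c - w c = lap z c.
Proof. by []. Qed.

Lemma topp_equiv_ext u w : (forall c, u c = w c) -> topp_equiv u w.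
Proof. by move=> e; apply/topp_equivE; exists (fun _ => 0) => c; rewrite lap0 e subrr. Qed.

Lemma topp_equiv_refl u : topp_equiv u u.
Proof. exact: topp_equiv_ext. Qed.

Lemma topp_equiv_sym u w : topp_equiv u w -> topp_equiv w u.
Proof.
move=> /topp_equivE [z hz]; apply/topp_equivE; exists (fun x => - z x) => c.
by rewrite lapN -hz opprB.
Qed.

Lemma topp_equiv_trans v u w : topp_equiv u v -> topp_equiv v w -> topp_equiv u w.
Proof.
move=> /topp_equivE [z1 h1] /topp_equivE [z2 h2]; apply/topp_equivE.
by exists (fun x => z1 x + z2 x) => c; rewrite lapD -h1 -h2 addrA subrK.
Qed.

Lemma topp_equiv_sub u w h : topp_equiv u w -> topp_equiv (csub u h) (csub w h).
Proof.
move=> /topp_equivE [z hz]; apply/topp_equivE; exists z => c.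
by rewrite /csub -hz opprB addrA subrK.
Qed.

Lemma topp_equiv_add u w h : topp_equiv u w -> topp_equiv (cadd u h) (cadd w h).
Proof.
move=> /topp_equivE [z hz]; apply/topp_equivE; exists z => c.
by rewrite /cadd -hz opprD addrACA subrr addr0.
Qed.

Lemma effective_equiv u w : topp_equiv u w -> effective u -> effective w.
Proof.
move=> huw [w0 [h1 h2]]; exists w0; split=> //.
exact: topp_equiv_trans (topp_equiv_sym huw) h1.
Qed.

Lemma effective_ext u w : (forall c, u c = w c) -> effective u -> effective w.
Proof. by move=> e; apply/effective_equiv/topp_equiv_ext. Qed.

Lemma nonneg_effective u : nonneg u -> effective u.
Proof. by move=> h; exists u; split=> //; apply: topp_equiv_refl. Qed.

Lemma degree_csub u w : degree (csub u w) = degree u - degree w.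
Proof. exact: sumrB. Qed.

Lemma degree_equiv u w : topp_equiv u w -> degree u = degree w.
Proof.
move=> /topp_equivE [z hz]; apply/eqP; rewrite -subr_eq0 -degree_csub.
by rewrite -(degree_lap z); apply/eqP/eq_bigr => c _; apply: hz.
Qed.

Lemma unitc_id c : unitc c c = 1.
Proof. by rewrite /unitc eqxx. Qed.

Lemma unitc_lr (i : 'I_m) (j : 'I_n) : unitc (inl i : vert m n) (inr j) = 0.
Proof. by []. Qed.

Lemma unitc_rl (i : 'I_m) (j : 'I_n) : unitc (inr j : vert m n) (inl i) = 0.
Proof. by []. Qed.

Lemma degree_unitc c : degree (unitc c) = 1.
Proof. by rewrite /degree (bigD1 c) //= big1 ?addr0 /unitc ?eqxx // => d /negbTE ->. Qed.

Lemma degree_ge0 u : nonneg u -> 0 <= degree u.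
Proof. by move=> h; apply: sumr_ge0. Qed.

Definition indic (C : {set vert m n}) : config m n := fun c => (c \in C)%:R.

Lemma toppleset_lap (C : {set vert m n}) c : toppleset C c = lap (indic C) c.
Proof.
rewrite /toppleset /lap big_mkcond; apply: eq_bigr => x _.
by rewrite /indic; case: (x \in C); rewrite ?mul1r ?mul0r.
Qed.

End Laplacian.

Section Reduced.
Variables (m n : nat) (q : 'I_m).
Implicit Types (v w y z : config m n) (c : vert m n).

Definition nonneg_off w := forall c, c != inl q -> 0 <= w c.

Definition reduced w : Prop :=
  nonneg_off w /\
  (forall C : {set vert m n}, C != set0 -> inl q \notin C ->
     exists c, c != inl q /\ w c - toppleset C c < 0).

Lemma toppleset_argmax_le_lap z c0 c : (forall d, z d <= z c0) -> z c = z c0 ->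
  toppleset [set d | z d == z c0] c <= lap z c.
Proof.
move=> zmax zc; rewrite toppleset_lap.
case: c zc => [i|j] zc; rewrite ?lapA ?lapB; apply: ler_sum => k _;
  rewrite /indic !inE zc eqxx; [have := zmax (inr k) | have := zmax (inl k)];
  case: eqP => [->|] /=; lia.
Qed.

Lemma toppleset_out_le0 (C : {set vert m n}) c : c \notin C -> toppleset C c <= 0.
Proof.
move=> /negbTE cC; rewrite toppleset_lap.
by case: c cC => [i|j] cC; rewrite ?lapA ?lapB; apply: sumr_le0 => d _;
  rewrite /indic cC sub0r oppr_le0; case: (_ \in _).
Qed.

Lemma reduced_max_principle y (d : config m n) z : reduced y ->
  (forall c, c != inl q -> d c <= 0) ->
  (forall c, c != inl q -> 0 <= y c + d c - lap z c) ->
  forall c, z c <= z (inl q).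
Proof.
move=> [y_ge0 y_red] d_le0 hz.
have [c0 _ zmax] := @arg_maxP _ _ _ (inl q) xpredT z isT.
suff : z c0 <= z (inl q) by move=> zq c; exact: le_trans (zmax c isT) zq.
rewrite leNgt; apply/negP => zq.
pose C := [set c | z c == z c0].
have C0 : C != set0 by apply/set0Pn; exists c0; rewrite inE.
have qC : inl q \notin C by rewrite inE; apply/negP => /eqP e; rewrite e ltxx in zq.
have [c [cq lt0]] := y_red C C0 qC.
have := hz c cq; have := d_le0 c cq; have := y_ge0 c cq.
have [cC|cC] := boolP (c \in C).
- move: cC; rewrite inE => /eqP zc.
  have := toppleset_argmax_le_lap (fun c => zmax c isT) zc; rewrite -/C; lia.
- have := toppleset_out_le0 cC; lia.
Qed.

Lemma lap_argmax_ge0 z i : (forall c, z c <= z (inl i)) -> 0 <= lap z (inl i).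
Proof. by move=> zmax; rewrite lapA; apply: sumr_ge0 => j _; rewrite subr_ge0. Qed.

Lemma reduced_nonneg v : reduced v -> 0 <= v (inl q) -> nonneg v.
Proof. by move=> [v_ge0 _] vq c; have [->|] := eqVneq c (inl q); last exact: v_ge0. Qed.

Lemma reduced_effectiveE v : reduced v -> effective v <-> 0 <= v (inl q).
Proof.
move=> v_red; split.
- move=> [w [/topp_equivE [z hz] w_ge0]].
  have zmax : forall c, z c <= z (inl q).
    apply: (reduced_max_principle (d := fun _ => 0) v_red) => // c _.
    by rewrite addr0 -hz opprB addrC subrK.
  by apply: le_trans (lap_argmax_ge0 zmax) _; rewrite -hz gerBl.
- move=> vq; apply: nonneg_effective => c.
  by have [->|cq] := eqVneq c (inl q); last exact: v_red.1.
Qed.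

(* The script is maximal at a_q, where y(a_q) < 0 makes its Laplacian vanish; so
   it is also maximal at b_x, whose Laplacian then cannot absorb the missing chip. *)
Lemma reduced_shift_not_effective y x : reduced y -> y (inl q) < 0 -> y (inr x) = 0 ->
  ~ effective (cadd (csub y (unitc (inr x))) (unitc (inl q))).
Proof.
move=> y_red yq yx [w [/topp_equivE [z hz] w_ge0]].
pose d : config m n := fun c => unitc (inl q) c - unitc (inr x) c.
have zmax : forall c, z c <= z (inl q).
  apply: (reduced_max_principle (d := d) y_red) => c cq.
    by rewrite /d /unitc (negbTE cq) sub0r oppr_le0; case: eqP.
  by rewrite /d -[lap z c]hz /cadd /csub; have := w_ge0 c; lia.
have lapq_ge0 c : 0 <= z (inl q) - z c by rewrite subr_ge0.
have lapq_eq0 : lap z (inl q) = 0.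
  apply/eqP; rewrite eq_le lap_argmax_ge0 // andbT -hz.
  have := w_ge0 (inl q); rewrite /cadd /csub unitc_rl unitc_id; lia.
have zx : z (inr x) = z (inl q).
  move: lapq_eq0; rewrite lapA => /psumr_eq0P/(_ x isT) zqx.
  by apply/eqP; rewrite eq_sym -subr_eq0 zqx // => j _; apply: lapq_ge0.
have : 0 <= lap z (inr x).
  by rewrite lapB; apply: sumr_ge0 => i _; rewrite zx lapq_ge0.
rewrite -hz /cadd /csub unitc_lr unitc_id yx; have := w_ge0 (inr x); lia.
Qed.

Hypothesis n_gt0 : (0 < n)%N.

Lemma reduced_has_zero_B v : reduced v -> exists j, v (inr j) = 0.
Proof.
move=> [v_ge0 v_red].
pose C := [set c : vert m n | c != inl q].
have C0 : C != set0 by apply/set0Pn; exists (inr (Ordinal n_gt0)); rewrite inE.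
have [c [cq]] := v_red C C0 ltac:(by rewrite inE eqxx).
have := v_ge0 c cq; rewrite toppleset_lap.
case: c cq => [i|j] cq vc_ge0 vc_lt.
- move: vc_lt; rewrite lapA big1 => [|j _]; last by rewrite /indic !inE cq subrr.
  by rewrite subr0 ltNge vc_ge0.
- exists j; move: vc_ge0 vc_lt; rewrite lapB (bigD1 q) //= big1 => [|i iq].
    by rewrite /indic !inE eqxx /=; lia.
  by rewrite /indic !inE (inj_eq inl_inj) iq subrr.
Qed.

Definition raising_script : config m n := fun c =>
  match c with inl i => if i == q then 0 else m.+1%:Z | inr _ => m%:Z end.

Lemma lap_raising_script c : c != inl q -> 1 <= lap raising_script c.
Proof.
case: c => [i|j] cq.
- rewrite (inj_eq inl_inj) in cq.
  rewrite lapA /= (negbTE cq) sumr_const card_ord; lia.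
- have m_gt0 : (0 < m)%N := leq_ltn_trans (leq0n q) (ltn_ord q).
  rewrite lapB (bigD1 q) //= eqxx (eq_bigr (fun _ => -1)) => [|i /negbTE -> /=]; last lia.
  rewrite sumr_const.
  have -> : #|[pred i : 'I_m | i != q]| = m.-1 by rewrite cardC1 card_ord.
  lia.
Qed.

Definition potential w : int := \sum_c raising_script c * w c.

Lemma potential_ge0 w : nonneg_off w -> 0 <= potential w.
Proof.
move=> w_ge0; apply: sumr_ge0 => c _.
have [->|cq] := eqVneq c (inl q); first by rewrite /= eqxx mul0r.
by apply: mulr_ge0 (w_ge0 c cq); case: c {cq} => [i|j] //=; case: (i == q).
Qed.

Lemma potential_fire w (C : {set vert m n}) : C != set0 -> inl q \notin C ->
  potential (csub w (toppleset C)) < potential w.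
Proof.
move=> /set0Pn [c0 c0C] qC.
have notq c : c \in C -> c != inl q by apply: contraTneq => ->.
rewrite /potential /csub; under eq_bigr do rewrite toppleset_lap mulrBr.
rewrite sumrB lap_sym gtrBl (bigD1 c0) //= ltr_wpDr //.
  apply: sumr_ge0 => c _; rewrite /indic.
  have [cC|] := boolP (c \in C); last by rewrite mul0r.
  by rewrite mul1r (le_trans _ (lap_raising_script (notq c cC))).
by rewrite /indic c0C mul1r (lt_le_trans _ (lap_raising_script (notq c0 c0C))).
Qed.

Lemma not_reduced_fire w : nonneg_off w -> ~ reduced w ->
  exists2 C : {set vert m n}, C != set0 /\ inl q \notin C &
    nonneg_off (csub w (toppleset C)).
Proof.
move=> w_ge0 w_nred; apply: NNPP => noC; apply: w_nred; split=> // C C0 qC.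
apply: NNPP => hC; apply: noC; exists C => // c cq.
by rewrite leNgt subr_lt0; apply/negP => lt; apply: hC; exists c; rewrite subr_lt0.
Qed.

Lemma reduce_nonneg_off (k : nat) w : nonneg_off w -> potential w < k%:Z ->
  exists v, reduced v /\ topp_equiv w v.
Proof.
elim: k w => [|k IH] w w_ge0 wk; first by have := potential_ge0 w_ge0; lia.
have [w_red|w_nred] := classic (reduced w).
  by exists w; split=> //; apply: topp_equiv_refl.
have [C [C0 qC] fired_ge0] := not_reduced_fire w_ge0 w_nred.
have [v [v_red equiv_v]] := IH _ fired_ge0 ltac:(have := potential_fire w C0 qC; lia).
exists v; split=> //; apply: topp_equiv_trans equiv_v.
by apply/topp_equivE; exists (indic C) => c; rewrite /csub toppleset_lap opprB addrC subrK.
Qed.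

Lemma exists_reduced u : exists v, reduced v /\ topp_equiv u v.
Proof.
pose t : int := \sum_c `|u c|.
pose w : config m n := fun c => u c + t * lap raising_script c.
have w_ge0 : nonneg_off w.
  move=> c cq; have := lap_raising_script cq.
  have : `|u c| <= t by rewrite /t (bigD1 c) //= lerDl sumr_ge0.
  rewrite /w; move: (lap _ c) (u c) => l x; nia.
have bound : potential w < (absz (potential w)).+1%:Z by have := ler_norm (potential w); lia.
have [v [v_red equiv_v]] := reduce_nonneg_off w_ge0 bound.
exists v; split=> //; apply: topp_equiv_trans equiv_v.
apply/topp_equivE; exists (fun c => - t * raising_script c) => c.
by rewrite lapZ /w opprD addrA subrr sub0r mulNr.
Qed.

End Reduced.

Section Witness.
Variables (m n : nat).
Implicit Types (u v f z : config m n) (c : vert m n).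

Definition swapB (j1 j2 : 'I_n) c : vert m n :=
  match c with inl i => inl i | inr j => inr (tperm j1 j2 j) end.

Lemma lap_swapB j1 j2 z c : lap (z \o swapB j1 j2) c = lap z (swapB j1 j2 c).
Proof.
case: c => [i|j]; rewrite ?lapA ?lapB //=.
by rewrite [RHS](reindex_inj (@perm_inj _ (tperm j1 j2))).
Qed.

Lemma effective_swapB j1 j2 u : effective u -> effective (u \o swapB j1 j2).
Proof.
move=> [w [/topp_equivE [z hz] w_ge0]].
exists (w \o swapB j1 j2); split=> [|c]; last exact: w_ge0.
by apply/topp_equivE; exists (z \o swapB j1 j2) => c; rewrite lap_swapB /= hz.
Qed.

Definition witness v f := nonneg f /\ ~ effective (csub v f).

Lemma witness_equiv v w f : topp_equiv v w -> witness v f -> witness w f.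
Proof.
move=> equiv_vw [f_ge0 vf_neff]; split=> // eff; apply: vf_neff.
exact: effective_equiv (topp_equiv_sym (topp_equiv_sub f equiv_vw)) eff.
Qed.

Definition transfer f c1 c2 (t : int) : config m n :=
  fun c => f c - t * unitc c1 c + t * unitc c2 c.

Lemma degree_transfer f c1 c2 t : degree (transfer f c1 c2 t) = degree f.
Proof.
rewrite /degree /transfer big_split sumrB /= -!mulr_sumr.
by rewrite -!/(degree (unitc _)) !degree_unitc subrK.
Qed.

Lemma transfer_ge0 f c1 c2 t : nonneg f -> 0 <= t -> t <= f c1 ->
  nonneg (transfer f c1 c2 t).
Proof.
move=> f_ge0 t_ge0 t_le c; rewrite /transfer /unitc.
have [->|_] := eqVneq c c1; have := f_ge0 c; case: eqP => _; lia.
Qed.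

Lemma witness_swap v f b b' : nonneg v -> v (inr b) = 0 -> witness v f ->
  f (inr b) = 0 -> v (inr b') < f (inr b') ->
  witness v (transfer f (inr b') (inr b) (f (inr b') - v (inr b'))).
Proof.
move=> v_ge0 vb [f_ge0 vf_neff] fb lt_b'.
have bb' : b' != b by apply: contraTneq lt_b' => ->; rewrite vb fb ltxx.
set t := f (inr b') - v (inr b').
have unitc_bb' : unitc (inr b' : vert m n) (inr b) = 0.
  by rewrite /unitc (inj_eq inr_inj) eq_sym (negbTE bb').
have unitc_b'b : unitc (inr b : vert m n) (inr b') = 0.
  by rewrite /unitc (inj_eq inr_inj) (negbTE bb').
split; first by apply: transfer_ge0 => //; rewrite /t; have := v_ge0 (inr b'); lia.
(* Removing the new witness from [v] gives [v - f] with [b] and [b'] exchanged. *)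
move=> /(effective_swapB b b') eff; apply: vf_neff; apply: effective_ext eff.
case=> [i|j]; rewrite /csub /transfer /t /=; first by rewrite !unitc_rl mulr0 subr0 addr0.
have [->|jb] := eqVneq j b; first by rewrite tpermL unitc_id unitc_b'b vb fb; lia.
have [->|jb'] := eqVneq j b'; first by rewrite tpermR unitc_id unitc_bb' vb fb; lia.
rewrite tpermD 1?eq_sym // /unitc !(inj_eq inr_inj).
by rewrite (negbTE jb) (negbTE jb') mulr0 subr0 addr0.
Qed.

Hypothesis n_gt0 : (0 < n)%N.

Lemma not_effective_transfer v f a : ~ effective (csub v f) ->
  exists x, ~ effective (csub v (transfer f (inl a) (inr x) 1)).
Proof.
move=> vf_neff.
have [p [p_red equiv_p]] := exists_reduced a n_gt0 (csub v f).
have pa : p (inl a) < 0.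
  rewrite ltNge; apply/negP => pa; apply: vf_neff.
  exact: effective_equiv (topp_equiv_sym equiv_p) ((reduced_effectiveE p_red).2 pa).
(* The chip goes to a zero of the reduced form of [v - f] at [a]. *)
have [x px] := reduced_has_zero_B n_gt0 p_red.
exists x => eff; apply: (reduced_shift_not_effective p_red pa px).
apply: effective_equiv eff.
apply: topp_equiv_trans (topp_equiv_add _ (topp_equiv_sub _ equiv_p)).
by apply: topp_equiv_ext => c; rewrite /csub /cadd /transfer !mul1r; ring.
Qed.

Definition sumA f : int := \sum_(i < m) f (inl i).

Lemma sumA_transfer f a x t : sumA (transfer f (inl a) (inr x) t) = sumA f - t.
Proof.
rewrite /sumA /transfer big_split sumrB -!mulr_sumr.
have -> : \sum_(i < m) unitc (inr x : vert m n) (inl i) = 0 by rewrite big1.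
have -> : \sum_(i < m) unitc (inl a : vert m n) (inl i) = 1.
  rewrite (bigD1 a) //= unitc_id big1 ?addr0 // => i ia.
  by rewrite /unitc (inj_eq inl_inj) (negbTE ia).
by rewrite /= mulr0 mulr1 addr0.
Qed.

Lemma witness_charge_step v f b : nonneg v -> v (inr b) = 0 -> witness v f ->
  (exists f', [/\ witness v f', degree f' = degree f & 1 <= f' (inr b)]) \/
  exists2 g, witness v g & degree g = degree f /\ sumA g < sumA f.
Proof.
move=> v_ge0 vb wf; have [f_ge0 vf_neff] := wf.
have [fb|] := boolP (1 <= f (inr b)); first by left; exists f.
rewrite -ltNge => fb; have {}fb : f (inr b) = 0 by have := f_ge0 (inr b); lia.
have [[b' lt_b']|f_le_v] := classic (exists b', v (inr b') < f (inr b')).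
  left; eexists; split; first exact: witness_swap v_ge0 vb wf fb lt_b'.
    exact: degree_transfer.
  have bb' : b != b' by apply: contraTneq lt_b' => <-; rewrite vb fb ltxx.
  by rewrite /transfer unitc_id /unitc (inj_eq inr_inj) (negbTE bb') fb; lia.
right.
have [a fa] : exists a, 1 <= f (inl a).
  apply: NNPP => no_a; apply/vf_neff/nonneg_effective => -[i|j]; rewrite /csub subr_ge0.
    have := v_ge0 (inl i); have := f_ge0 (inl i).
    have : ~ 1 <= f (inl i) by move=> fi; apply: no_a; exists i.
    lia.
  by rewrite leNgt; apply/negP => lt; apply: f_le_v; exists j.
have [x vf'_neff] := not_effective_transfer a vf_neff.
exists (transfer f (inl a) (inr x) 1); first by split=> //; apply: transfer_ge0.
by rewrite degree_transfer sumA_transfer; split=> //; lia.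
Qed.

Lemma witness_charging v f b : nonneg v -> v (inr b) = 0 -> witness v f ->
  exists f', [/\ witness v f', degree f' = degree f & 1 <= f' (inr b)].
Proof.
move=> v_ge0 vb.
have [k] : exists k : nat, sumA f < k%:Z.
  by exists (absz (sumA f)).+1; have := ler_norm (sumA f); lia.
elim: k f => [|k IH] f fk wf.
  by have : 0 <= sumA f := sumr_ge0 _ (fun i _ => wf.1 (inl i)); lia.
have [//|[g wg [<- gf]]] := witness_charge_step v_ge0 vb wf.
by apply: IH wg; lia.
Qed.

End Witness.

Lemma rank_eq m n (u : config m n) r : rank_spec u r -> rank u = r.
Proof.
have spec_uniq r1 r2 : rank_spec u r1 -> rank_spec u r2 -> r1 = r2.
  move=> [[f1 [f1_ge0 [neff1 e1]]] min1] [[f2 [f2_ge0 [neff2 e2]]] min2].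
  by have := min1 f2 f2_ge0 neff2; have := min2 f1 f1_ge0 neff1; lia.
by move=> ur; apply: (spec_uniq _ _ _ ur); apply: epsilon_spec; exists r.
Qed.

Section Procedure.
Variables (m n : nat) (hm : (0 < m)%N) (hn : (0 < n)%N).
Implicit Types (u v f : config m n) (idx : nat -> 'I_n).

(* [parking hm] is [reduced] at the sink by definition. *)
Lemma park_spec u : parking hm (park hm u) /\ topp_equiv u (park hm u).
Proof.
apply: (epsilon_spec (inhabits u) (fun v => parking hm v /\ topp_equiv u v)).
by have [v [v_red equiv_v]] := exists_reduced (Ordinal (sink_lt hm)) hn u; exists v.
Qed.

Lemma witness_park_sub v f c : witness v f -> 1 <= f c ->
  witness (park hm (csub v (unitc c))) (csub f (unitc c)).
Proof.
move=> [f_ge0 vf_neff] fc; split.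
  by move=> d; rewrite /csub /unitc; case: eqP => [->|_]; rewrite ?subr0 ?subr_ge0.
move=> /(effective_equiv (topp_equiv_sym (topp_equiv_sub _ (park_spec _).2))) eff.
by apply: vf_neff; apply: effective_ext eff => d; rewrite /csub; lia.
Qed.

Lemma traj_equiv u idx k : topp_equiv (csub u (ftraj (m:=m) idx k)) (traj hm u idx k).
Proof.
elim: k => [|k IH] /=.
  apply: topp_equiv_trans (park_spec u).2.
  by apply: topp_equiv_ext => c; rewrite /csub /ftraj big_ord0 subr0.
apply: topp_equiv_trans (park_spec _).2.
apply: topp_equiv_trans (topp_equiv_sub _ IH).
by apply: topp_equiv_ext => c; rewrite /csub /ftraj big_ord_recr opprD addrA.
Qed.

Lemma degree_ftraj idx k : degree (ftraj (m:=m) idx k) = k%:Z.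
Proof.
rewrite /degree /ftraj exchange_big /=.
rewrite (eq_bigr (fun _ => 1)) => [|j _]; last exact: degree_unitc.
by rewrite sumr_const card_ord natz.
Qed.

Lemma nonneg_ftraj idx k : nonneg (ftraj (m:=m) idx k).
Proof. by move=> c; apply: sumr_ge0 => j _; rewrite /unitc; case: eqP. Qed.

Lemma traj_parking u idx k : parking hm (traj hm u idx k).
Proof. by case: k => [|k]; apply: (park_spec _).1. Qed.

Lemma traj_legal_nonneg u idx k : legal_step hm u idx k -> nonneg (traj hm u idx k).
Proof. by move=> [sink_ge0 _]; apply: reduced_nonneg (traj_parking u idx k) sink_ge0. Qed.

Lemma traj_terminates u idx : ~ (forall k, legal_step hm u idx k).
Proof.
move=> legal; pose k := (absz (degree u)).+1.
have := degree_ge0 (traj_legal_nonneg (legal k)).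
rewrite -(degree_equiv (traj_equiv u idx k)) degree_csub degree_ftraj.
by have := ler_norm (degree u); rewrite /k; lia.
Qed.

Lemma witness_traj_degree u idx N : (forall k, (k < N)%N -> legal_step hm u idx k) ->
  forall d k f, (k + d = N)%N -> witness (traj hm u idx k) f -> d%:Z <= degree f.
Proof.
move=> legal; elim=> [|d IH] k f kdN wf; first by rewrite degree_ge0 //; case: wf.
have kN : (k < N)%N by lia.
have [_ zero_idx] := legal k kN.
have [f' [wf' <- f'b]] := witness_charging hn (traj_legal_nonneg (legal k kN)) zero_idx wf.
have := IH k.+1 _ ltac:(lia) (witness_park_sub wf' f'b).
by rewrite degree_csub degree_unitc; lia.
Qed.

Lemma witness_ftraj u idx N :
  traj hm u idx N (sink n hm) < 0 -> witness u (ftraj (m:=m) idx N).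
Proof.
move=> sink_lt0; split; first exact: nonneg_ftraj.
move=> /(effective_equiv (traj_equiv u idx N)).
by rewrite (reduced_effectiveE (traj_parking u idx N)) leNgt sink_lt0.
Qed.

Lemma rank_spec_traj u idx N : (forall k, (k < N)%N -> legal_step hm u idx k) ->
  traj hm u idx N (sink n hm) < 0 -> rank_spec u (N%:Z - 1).
Proof.
move=> legal sink_lt0; rewrite /rank_spec subrK; split.
  by exists (ftraj idx N); rewrite degree_ftraj; have [] := witness_ftraj sink_lt0.
move=> f f_ge0 uf_neff.
have wf := witness_equiv (park_spec u).2 (conj f_ge0 uf_neff).
exact: witness_traj_degree legal _ _ _ (add0n N) wf.
Qed.

End Procedure.

Theorem theorem2p1 (m n : nat) (hm : (0 < m)%N) (hn : (0 < n)%N)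
    (u : config m n) :
  (forall (idx : nat -> 'I_n) (N : nat),
     (forall k, (k < N)%N -> legal_step hm u idx k) ->
     0 <= traj hm u idx N (sink n hm) ->
     exists i : 'I_n, traj hm u idx N (bvert m i) = 0) /\
  (forall idx : nat -> 'I_n, ~ (forall k, legal_step hm u idx k)) /\
  (forall (idx : nat -> 'I_n) (N : nat),
     (forall k, (k < N)%N -> legal_step hm u idx k) ->
     traj hm u idx N (sink n hm) < 0 ->
     rank_proof u (ftraj (m:=m) idx N) /\
     rank u = N%:Z - 1 /\ rank u = degree (ftraj (m:=m) idx N) - 1).
Proof.
split; [|split].
- move=> idx N _ _.
  by have [j zero_j] := reduced_has_zero_B hn (traj_parking hm hn u idx N); exists j.
- by move=> idx; exact: (traj_terminates (u := u) (idx := idx) hn).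
- move=> idx N legal sink_lt0.
  have [f_ge0 neff] := witness_ftraj hn sink_lt0.
  have rank_u := rank_eq (rank_spec_traj hn legal sink_lt0).
  by rewrite /rank_proof degree_ftraj rank_u subrK.
Qed.
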